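(* Let $u$ be a node with a set of incident directed edges $(u,v)$, each with identifier $\mathrm{id}(u,v)=\mathrm{id}(u)\circ\mathrm{id}(v)$ (concatenation); each such edge is blue if $v$ is playing and red otherwise, and $u$ does not know which edges are blue. Let $h_1,\dots,h_s$ be independent, perfectly random hash functions mapping edges to $[q]=\{0,\dots,q-1\}$ (the trials); an edge participates in trial $i$ if $h_j(e)=i$ for some $j$. For each trial $i$, $u$ knows $X(i)$ (the XOR of identifiers of all its edges participating in trial $i$), $x(i)$ (their number), $X'(i)$ (the XOR of identifiers of its blue edges participating in trial $i$) and $x'(i)$ (their number). Node $u$ repeatedly does the following while possible: find a trial $i$ with $x(i)=x'(i)+1$, identify the red edge with identifier $X(i)\oplus X'(i)$, and for every trial $i'$ in which this edge participates replace $X(i')$ by $X(i')\oplus$ (its identifier) and decrease $x(i')$ by $1$. Suppose $u$ is incident to at most $p$ red edges, $s\ge 4$ and $q\ge 4esp$. Then for every positive integer $k$, \[ \Pr[u\text{ fails to identify at least }k\text{ red edges}]\le 2\left(\frac{2sk}{q}\right)^{(s-2)k/2}. \]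
   Context: This is the analysis of an identification procedure in which a node $u$ wants to learn which of its neighbors belong to a set of ''playing'' nodes; the values $X'(i),x'(i)$ are assumed to be delivered to $u$ correctly. ''Fails to identify'' refers to red edges that remain unidentified when the procedure stops. *)

From HB Require Import structures.
From mathcomp Require Import all_boot all_order all_algebra all_field.
From mathcomp Require Import all_classical all_reals all_analysis.
Set Implicit Arguments. Unset Strict Implicit. Unset Printing Implicit Defensive.
Import Order.TTheory GRing.Theory Num.Theory.

(* Edges of u are the elements of a finite type T; identifiers are bit strings
   of length b, i.e. row vectors over F_2 (sum = XOR). *)

Section Peeling.
Variables (T : finType) (b s q : nat).
Variable (id : T -> 'rV['F_2]_b).
Variable (blue : {set T}).
Variable (H : {ffun 'I_s -> {ffun T -> 'I_q}}).

Definition participates (e : T) (i : 'I_q) : bool := [exists j, H j e == i].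

(* D = set of red edges already identified (and removed from X, x) *)
Definition Xc (D : {set T}) (i : 'I_q) : 'rV['F_2]_b :=
  (\sum_(e | participates e i && (e \notin D)) id e)%R.
Definition xc (D : {set T}) (i : 'I_q) : nat :=
  #|[set e | participates e i & e \notin D]|.
Definition Xb (i : 'I_q) : 'rV['F_2]_b :=
  (\sum_(e in blue | participates e i) id e)%R.
Definition xb (i : 'I_q) : nat := #|[set e in blue | participates e i]|.

Definition peel_step (D D' : {set T}) : bool :=
  [exists i : 'I_q, (xc D i == (xb i).+1) &&
     [exists e, [&& e \notin blue, id e == (Xc D i + Xb i)%R & D' == e |: D]]].

Definition peel_stuck (D : {set T}) : bool :=
  ~~ [exists i : 'I_q, xc D i == (xb i).+1].

Definition fails (k : nat) : bool :=
  [exists D : {set T}, [&& connect peel_step finset.set0 D, peel_stuck D &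
                           k <= #|~: blue :\: D|]].
End Peeling.

Definition fail_prob (R : realType) (T : finType) (b s q : nat)
  (id : T -> 'rV['F_2]_b) (blue : {set T}) (k : nat) : R :=
  (#|[set H : {ffun 'I_s -> {ffun T -> 'I_q}} | fails id blue H k]|%:R
   / #|{: {ffun 'I_s -> {ffun T -> 'I_q}}}|%:R)%R.

From HB Require Import structures.
From mathcomp Require Import all_boot all_order all_algebra all_field.
From mathcomp Require Import all_classical all_reals all_analysis.
From mathcomp Require Import lra zify ring.
Import Order.TTheory GRing.Theory Num.Theory.
Import mathcomp.boot.fintype mathcomp.boot.finset.

Set Implicit Arguments. Unset Strict Implicit. Unset Printing Implicit Defensive.

(* When the procedure is stuck after identifying the set D, no trial contains
   exactly one of the red edges S left unidentified, so every trial hit by S is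
   hit at least twice and S hits at most s|S|/2 trials. Hence, if the procedure
   fails, for some m >= k there are a set S of m red edges and a set U of
   (sm)/2 trials containing all s hashes of every edge of S. A union bound over
   S and U bounds the failure probability by
   sum_(m >= k) C(r, m) C(q, (sm)/2) ((sm)/2 / q)^(sm); using
   C(n, t) <= (en/t)^t and q >= 4esp, the square of the m-th term is at most
   (2sm/q)^((s-2)m), which shrinks by a factor 4 from m to m+1. So the m-th
   term is at most 2^-(m-k) (2sk/q)^((s-2)k/2), and the geometric series
   gives the factor 2. *)

Lemma exists_superset_card (X : finType) (A : {set X}) n :
  #|A| <= n <= #|X| -> exists2 B : {set X}, A \subset B & #|B| = n.
Proof.
case/andP=> le_An; rewrite -(subnKC le_An); move: (n - #|A|) => d {le_An}.
elim: d A => [|d IH] A; first by exists A; rewrite ?addn0.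
rewrite addnS => lt_AX.
have /card_gt0P[x] : 0 < #|~: A| by rewrite cardsCs setCK subn_gt0 (leq_trans (leq_addr d _)).
rewrite inE => xA.
have [|B xAB cardB] := IH (x |: A); first by rewrite cardsU1 xA add1n.
by exists B; [apply: subset_trans xAB; apply: subsetUr | rewrite cardB cardsU1 xA add1n].
Qed.

Lemma leq_card_bigcup (I : Type) (r : seq I) (P : pred I) (X : finType) (F : I -> {set X}) :
  #|\bigcup_(i <- r | P i) F i| <= \sum_(i <- r | P i) #|F i|.
Proof.
apply: (big_rec2 (fun (A : {set X}) n => #|A| <= n)); first by rewrite cards0.
by move=> i A n _ le_An; apply: leq_trans (leq_card_setU _ _) _; rewrite leq_add2l.
Qed.

Lemma card_family_prod (aT rT : finType) (F : aT -> pred rT) :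
  #|family F| = \prod_x #|F x|.
Proof. by rewrite card_family foldrE big_map big_enum. Qed.

Lemma leq_ffact_exp n t : n ^_ t <= n ^ t.
Proof. by elim: t => // t IH; rewrite ffactnSr expnSr leq_mul ?leq_subr. Qed.

Section HashInto.
Variables (T : finType) (s q : nat).

Definition hash_into (S : {set T}) (U : {set 'I_q}) : {set {ffun 'I_s -> {ffun T -> 'I_q}}} :=
  [set H : {ffun 'I_s -> {ffun T -> 'I_q}} | [forall j, [forall e in S, H j e \in U]]].

Lemma card_hash_into (S : {set T}) (U : {set 'I_q}) :
  #|hash_into S U| = (#|U| ^ #|S| * q ^ (#|T| - #|S|)) ^ s.
Proof.
pose F e : {set 'I_q} := if e \in S then U else setT.
have -> : hash_into S U = [set H in family (fun=> family F)].
  apply/setP => H; rewrite !inE; apply: eq_forallb => j; apply: eq_forallb => e.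
  by rewrite /F /finfun.fmem /=; case: (e \in S); rewrite ?inE.
rewrite cardsE card_family_prod prod_nat_const card_ord card_family_prod (bigID (mem S)) /=.
rewrite (eq_bigr (fun=> #|U|)) => [|e eS]; last by rewrite /F eS.
rewrite [X in _ * X](eq_bigr (fun=> q)) => [|e eS]; last by rewrite /F (negbTE eS) cardsT card_ord.
by rewrite !prod_nat_const -(cardC S) addKn.
Qed.

Lemma sum_card_hash_into (B : {set T}) m u :
  \sum_(S in [set S : {set T} | S \subset B & #|S| == m])
     \sum_(U in [set U : {set 'I_q} | #|U| == u]) #|hash_into S U|
  = 'C(#|B|, m) * 'C(q, u) * (u ^ m * q ^ (#|T| - m)) ^ s.
Proof.
rewrite (eq_bigr (fun=> 'C(q, u) * (u ^ m * q ^ (#|T| - m)) ^ s)) => [|S].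
  by rewrite sum_nat_const cards_draws mulnA.
rewrite inE => /andP[_ /eqP <-]; rewrite (eq_bigr (fun=> (u ^ #|S| * q ^ (#|T| - #|S|)) ^ s)).
  by rewrite sum_nat_const card_draws card_ord.
by move=> U; rewrite inE => /eqP <-; rewrite card_hash_into.
Qed.

End HashInto.

Section Peeling.
Variables (T : finType) (b s q : nat) (id : T -> 'rV['F_2]_b) (blue : {set T}).
Variable H : {ffun 'I_s -> {ffun T -> 'I_q}}.

Definition trials_hit (S : {set T}) : {set 'I_q} :=
  [set i | [exists e in S, participates H e i]].

Lemma peel_reachable_red (D : {set T}) :
  connect (peel_step id blue H) set0 D -> D \subset ~: blue.
Proof.
case/connectP => path0 + ->; elim: path0 set0 (sub0set (~: blue)) => //= D' path0 IH D0 D0red.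
case/andP => /existsP[i /andP[_ /existsP[e /and3P[e_red _ /eqP->]]]].
by apply: IH; rewrite subUset sub1set inE e_red.
Qed.

Lemma xcE (D : {set T}) (i : 'I_q) : D \subset ~: blue ->
  xc H D i = xb blue H i + #|[set e in ~: blue :\: D | participates H e i]|.
Proof.
move=> Dred; rewrite /xc /xb -(cardsID blue); congr (_ + _); apply: eq_card => e; rewrite !inE.
  case: (boolP (e \in blue)) => [eb|] /=; last by rewrite andbF.
  have eD : e \notin D by apply: contraL eb => /(subsetP Dred); rewrite inE.
  by rewrite eD; case: (participates H e i).
by case: (e \in D); rewrite ?andbF ?andbT.
Qed.

Lemma peel_stuck_no_single (D : {set T}) (i : 'I_q) :
  D \subset ~: blue -> peel_stuck blue H D ->
  #|[set e in ~: blue :\: D | participates H e i]| != 1.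
Proof. by move=> Dred /existsPn/(_ i); rewrite xcE // -addn1 eqn_add2l. Qed.

Lemma card_trials_le (e : T) : #|[set i | participates H e i]| <= s.
Proof.
have -> : [set i | participates H e i] = [set H j e | j : 'I_s].
  apply/setP => i; rewrite inE; apply/existsP/imsetP => -[j].
    by move=> /eqP <-; exists j.
  by move=> _ ->; exists j.
by apply: leq_trans (leq_imset_card _ _) _; rewrite card_ord.
Qed.

Lemma card_trials_hit_le_half (S : {set T}) :
  (forall i, #|[set e in S | participates H e i]| != 1) ->
  #|trials_hit S| <= (s * #|S|)./2.
Proof.
move=> no_single; rewrite geq_half_double -muln2 -sum_nat_const.
have incidences : \sum_i #|[set e in S | participates H e i]|
                = \sum_(e in S) #|[set i | participates H e i]|.
  under eq_bigr do rewrite -sum1_card.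
  rewrite (exchange_big_dep (mem S)) /=; last by move=> i e _; rewrite inE => /andP[].
  apply: eq_bigr => e eS; rewrite -sum1_card; apply: eq_bigl => i.
  by rewrite !inE eS.
apply: (@leq_trans (\sum_i #|[set e in S | participates H e i]|)).
  rewrite [X in _ <= X](bigID (mem (trials_hit S))) /= -[X in X <= _]addn0 leq_add //.
  apply: leq_sum => i; rewrite inE => /existsP[e /andP[eS pei]].
  have : 0 < #|[set e in S | participates H e i]| by apply/card_gt0P; exists e; rewrite inE eS.
  by move: (no_single i); case: #|_| => [|[|]].
by rewrite incidences mulnC -sum_nat_const leq_sum // => e _; exact: card_trials_le.
Qed.

End Peeling.

Section FailureEvent.
Variables (T : finType) (b s q : nat) (id : T -> 'rV['F_2]_b) (blue : {set T}).
Local Notation r := #|~: blue|.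

Lemma fails_le_red (H : {ffun 'I_s -> {ffun T -> 'I_q}}) k : fails id blue H k -> k <= r.
Proof. by case/existsP => D /and3P[_ _ /leq_trans]; apply; apply/subset_leq_card/subsetDl. Qed.

Hypothesis sr_le_q : s * r <= q.

Lemma fails_hash_into (H : {ffun 'I_s -> {ffun T -> 'I_q}}) k : fails id blue H k ->
  exists (S : {set T}) (U : {set 'I_q}),
    [/\ S \subset ~: blue, k <= #|S|, #|U| = (s * #|S|)./2 & H \in hash_into s S U].
Proof.
case/existsP => D /and3P[reach stuck le_k].
have Dred := peel_reachable_red reach.
set S := ~: blue :\: D in le_k.
have S_red : S \subset ~: blue by apply: subsetDl.
have hit_le : #|trials_hit H S| <= (s * #|S|)./2.
  by apply: card_trials_hit_le_half => i; exact: peel_stuck_no_single.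
have [|U hitU cardU] := exists_superset_card (A := trials_hit H S) (n := (s * #|S|)./2).
  rewrite hit_le card_ord /=; have := leq_mul (leqnn s) (subset_leq_card S_red).
  by move: sr_le_q; lia.
exists S, U; split => //; rewrite inE; apply/forallP => j; apply/forall_inP => e eS.
by apply: (subsetP hitU); rewrite inE; apply/exists_inP; exists e => //; apply/existsP; exists j.
Qed.

Lemma card_fails_le k :
  #|[set H : {ffun 'I_s -> {ffun T -> 'I_q}} | fails id blue H k]| <=
  \sum_(k <= m < r.+1) 'C(r, m) * 'C(q, (s * m)./2) * (((s * m)./2) ^ m * q ^ (#|T| - m)) ^ s.
Proof.
under eq_bigr do rewrite -sum_card_hash_into.
rewrite big_geq_mkord; apply: leq_trans (leq_trans _ (leq_card_bigcup _ _ _)) _; last first.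
  apply: leq_sum => m _; apply: leq_trans (leq_card_bigcup _ _ _) _.
  by apply: leq_sum => S _; exact: leq_card_bigcup.
apply/subset_leq_card/subsetP => H; rewrite inE.
case/fails_hash_into => S [U [Sred kS cardU HSU]].
have lt_Sr : #|S| < r.+1 by rewrite ltnS subset_leq_card.
apply/bigcupP; exists (Ordinal lt_Sr); first by rewrite /= kS.
apply/bigcupP; exists S; first by rewrite inE Sred /=.
by apply/bigcupP; exists U; rewrite // inE cardU.
Qed.

End FailureEvent.

Local Open Scope ring_scope.

Lemma sqr_powR_half (R : realType) (x : R) n : 0 <= x -> (x `^ (n%:R / 2)) ^+ 2 = x ^+ n.
Proof.
by move=> x_ge0; rewrite -powR_mulrn ?powR_ge0 // -powRrM divfK ?pnatr_eq0 // powR_mulrn.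
Qed.

Lemma sum_halfX_le2 (R : realType) k N : \sum_(k <= m < N) (2^-1 : R) ^+ (m - k) <= 2.
Proof.
rewrite -{1}(add0n k) big_addn; under eq_bigr do rewrite addnK.
have := @geometric_le_lim R (N - k) 1 2^-1; rewrite /series /= mul1r.
under eq_bigr do rewrite /geometric /= mul1r.
have -> : (1 - 2^-1 : R)^-1 = 2 by rewrite {1}(splitr 1) div1r addrK invrK.
by apply; rewrite ?ler01 ?invr_gt0 ?ger0_norm ?invf_lt1 ?ltr1n ?invr_ge0.
Qed.

Lemma hash_into_ratio (R : realType) s q n m u : (0 < q)%N -> (m <= n)%N ->
  ((u ^ m * q ^ (n - m)) ^ s)%:R / ((q ^ n) ^ s)%:R = (u%:R / q%:R) ^+ (s * m) :> R.
Proof.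
move=> q_gt0 m_le_n; have q0 : (q%:R : R) != 0 by rewrite pnatr_eq0 -lt0n.
rewrite -{2}(subnKC m_le_n) !natrX natrM exprD -expr_div_n mulnC exprM; congr (_ ^+ _).
by rewrite invfM mulrACA !natrX mulfV ?expf_neq0 // mulr1 expr_div_n.
Qed.

Section ExpBounds.
Context {R : realType}.
Local Notation e := (expR 1 : R).

Lemma expR1_ge1 : 1 <= e.
Proof. by rewrite -expR0 ler_expR. Qed.

Lemma expR1_le4 : e <= 4.
Proof.
have : 1 / 2 <= expR (- (1 / 2) : R) by have := expR_ge1Dx (- (1 / 2) : R); lra.
have := expRxMexpNx_1 (1 / 2 : R); have := expR_gt0 (1 / 2 : R).
have -> : e = expR (1 / 2) ^+ 2 by rewrite -expRM_natr; congr expR; lra.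
nra.
Qed.

Lemma exprSn_le_expR1 m : (m.+1%:R : R) ^+ m <= e * m%:R ^+ m.
Proof.
case: m => [|m]; first by rewrite !expr0 mulr1 expR1_ge1.
have m_gt0 : 0 < (m.+1%:R : R) by rewrite ltr0n.
have -> : (m.+2%:R : R) = m.+1%:R * (1 + m.+1%:R^-1).
  by rewrite mulrDr mulr1 mulfV ?gt_eqF // -natr1.
rewrite exprMn mulrC; apply: ler_wpM2r; first by rewrite exprn_ge0 // ltW.
apply: (@le_trans _ _ (expR (m.+1%:R^-1) ^+ m.+1)).
  by rewrite lerXn2r ?nnegrE ?expR_ge1Dx ?addr_ge0 ?invr_ge0 ?expR_ge0 ?ltW.
by rewrite -expRM_natr mulVf ?gt_eqF.
Qed.

Lemma exprnn_le_fact m : (m%:R : R) ^+ m <= e ^+ m * m`!%:R.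
Proof.
elim: m => [|m IH]; first by rewrite !expr0 mulr1.
rewrite exprS factS natrM mulrCA exprS -mulrA; apply: ler_wpM2l; first exact: ler0n.
by apply: le_trans (exprSn_le_expR1 m) _; apply: ler_wpM2l; rewrite ?expR_ge0.
Qed.

Lemma bin_exprn_le n t : 'C(n, t)%:R * (t%:R : R) ^+ t <= e ^+ t * n%:R ^+ t.
Proof.
apply: le_trans (ler_wpM2l (ler0n _ _) (exprnn_le_fact t)) _.
rewrite mulrCA; apply: ler_wpM2l; first by rewrite exprn_ge0 ?expR_ge0.
by rewrite -natrM bin_ffact -natrX ler_nat leq_ffact_exp.
Qed.

Lemma bin_le_ratio_pow r m : (0 < m)%N -> 'C(r, m)%:R <= (e * r%:R / m%:R) ^+ m.
Proof.
move=> m_gt0; have mm_gt0 : 0 < (m%:R : R) ^+ m by rewrite exprn_gt0 // ltr0n.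
by rewrite expr_div_n ler_pdivlMr // exprMn bin_exprn_le.
Qed.

Lemma bin_mul_ratio_pow_le q t : (0 < q)%N -> 'C(q, t)%:R * (t%:R / q%:R) ^+ t <= e ^+ t.
Proof.
move=> q_gt0; have qt_gt0 : 0 < (q%:R : R) ^+ t by rewrite exprn_gt0 // ltr0n.
by rewrite expr_div_n mulrA ler_pdivrMr // bin_exprn_le.
Qed.

Lemma bin_half_sqr_le q n : (0 < q)%N -> (n <= q.*2)%N ->
  ('C(q, n./2)%:R * (n./2%:R / q%:R) ^+ n) ^+ 2 <= (e * n%:R / (2 * q%:R)) ^+ n.
Proof.
move=> q_gt0 n_le; set t := n./2; set b := t%:R / q%:R; pose c : R := n%:R / (2 * q%:R).
have t2_le : (t.*2 <= n)%N by rewrite -geq_half_double.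
have t_le : (t <= n)%N by rewrite (leq_trans (leq_addl t t)) // addnn.
have q0 : 0 < (q%:R : R) by rewrite ltr0n.
have b_ge0 : 0 <= b by rewrite divr_ge0 ?ler0n ?ltW.
have b_le_c : b <= c.
  rewrite /b /c invfM mulrCA mulrA ler_pM2r ?invr_gt0 //.
  by rewrite mulrC ler_pdivlMr // -natrM ler_nat muln2.
have c_le1 : c <= 1 by rewrite ler_pdivrMr ?mulr_gt0 // mul1r -natrM ler_nat mul2n.
have split_t : 'C(q, t)%:R * b ^+ n <= e ^+ t * b ^+ (n - t).
  rewrite -(subnKC t_le) exprD mulrA addKn; apply: ler_wpM2r; first exact: exprn_ge0.
  exact: bin_mul_ratio_pow_le.
have -> : e * n%:R / (2 * q%:R) = e * c by rewrite mulrA.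
clearbody b c.
apply: le_trans (_ : (e ^+ t * b ^+ (n - t)) ^+ 2 <= _).
  by apply: lerXn2r; rewrite ?nnegrE ?mulr_ge0 ?exprn_ge0 ?ler0n ?expR_ge0.
rewrite !exprMn -!exprM; apply: ler_pM; rewrite ?exprn_ge0 ?expR_ge0 //.
  by apply: ler_weXn2l; rewrite ?expR1_ge1 // muln2.
apply: le_trans (_ : c ^+ ((n - t) * 2) <= _).
  by apply: lerXn2r; rewrite ?nnegrE ?(le_trans b_ge0).
apply: ler_wiXn2l; rewrite ?(le_trans b_ge0) //.
by move: t2_le; lia.
Qed.

End ExpBounds.

Section UnionTerms.
Variables (R : realType) (s q : nat).
Local Notation e := (expR 1 : R).

(* Union-bound contribution of the red sets S of size m, together with the
   sets of (sm)/2 trials that may contain all hashes of S. *)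
Definition union_term (r m : nat) : R :=
  'C(r, m)%:R * 'C(q, (s * m)./2)%:R * (((s * m)./2)%:R / q%:R) ^+ (s * m).

Definition rate (m : nat) : R := (2 * s%:R * m%:R / q%:R) ^+ ((s - 2) * m).

Variable p : nat.
Hypotheses (s_ge4 : (4 <= s)%N) (p_gt0 : (0 < p)%N).
Hypothesis q_large : 4 * e * s%:R * p%:R <= q%:R.

Let e_sp_le_q : e * (s * p)%:R <= q%:R / 4.
Proof. by rewrite ler_pdivlMr // natrM mulrC !mulrA. Qed.

Lemma leq_sp_q : (s * p <= q)%N.
Proof.
have sp_le : (s * p)%:R <= e * (s * p)%:R :> R by rewrite ler_peMl ?ler0n ?expR1_ge1.
have q_ge0 : 0 <= q%:R :> R by [].
by rewrite -(ler_nat R); move: e_sp_le_q; lra.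
Qed.

Lemma q_gt0 : (0 < q)%N.
Proof. by apply: leq_trans leq_sp_q; rewrite muln_gt0 p_gt0 (leq_trans _ s_ge4). Qed.

Lemma union_term_sqr_le r m : (0 < m)%N -> (m <= p)%N -> (r <= p)%N ->
  union_term r m ^+ 2 <= rate m.
Proof.
move=> m_gt0 m_le_p r_le_p; set n := (s * m)%N; set y := e * n%:R / (2 * q%:R).
have q0 : 0 < q%:R :> R by rewrite ltr0n q_gt0.
have m0 : 0 < m%:R :> R by rewrite ltr0n.
have n_le_q : (n <= q)%N by apply: leq_trans leq_sp_q; rewrite leq_mul2l m_le_p orbT.
have bin_r : 'C(r, m)%:R <= (e * p%:R / m%:R) ^+ m :> R.
  apply: le_trans (bin_le_ratio_pow r m_gt0) _; apply: lerXn2r; rewrite ?nnegrE;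
    by rewrite ?divr_ge0 ?mulr_ge0 ?expR_ge0 ?ler0n // ler_pM2r ?invr_gt0 // ler_pM2l ?expR_gt0 ?ler_nat.
have n_le_2q : (n <= q.*2)%N by rewrite -addnn (leq_trans n_le_q) ?leq_addr.
have bin_q := @bin_half_sqr_le R _ _ q_gt0 n_le_2q.
have y_ge0 : 0 <= y by rewrite divr_ge0 ?mulr_ge0 ?expR_ge0 ?ler0n.
have e_le4 : e <= 4 := expR1_le4.
have y_le : y <= 2 * s%:R * m%:R / q%:R.
  have -> : y = e / 4 * (2 * s%:R * m%:R / q%:R).
    by rewrite /y /n natrM; field; rewrite pnatr_eq0 -lt0n q_gt0.
  by rewrite ler_piMl ?divr_ge0 ?mulr_ge0 ?ler0n // ler_pdivrMr // mul1r.
have prod_le1 : e * p%:R / m%:R * y <= 1.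
  have -> : e * p%:R / m%:R * y = e / 2 * (e * (s * p)%:R / q%:R).
    by rewrite /y /n !natrM; field; rewrite !pnatr_eq0 -!lt0n q_gt0 m_gt0.
  have : e * (s * p)%:R / q%:R <= 1 / 4.
    by rewrite ler_pdivrMr // mul1r [X in _ <= X]mulrC.
  have : 0 <= e * (s * p)%:R / q%:R by rewrite divr_ge0 ?mulr_ge0 ?expR_ge0 ?ler0n.
  nra.
have n_split : n = (m * 2 + (s - 2) * m)%N.
  by rewrite (mulnC m) -mulnDl subnKC // (leq_trans _ s_ge4).
rewrite /union_term -mulrA exprMn.
apply: le_trans (_ : ((e * p%:R / m%:R) ^+ m) ^+ 2 * y ^+ n <= _).
  apply: ler_pM; rewrite ?exprn_ge0 ?ler0n //.
  by apply: lerXn2r; rewrite ?nnegrE ?ler0n ?exprn_ge0 ?divr_ge0 ?mulr_ge0 ?expR_ge0 ?ler0n.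
rewrite -exprM n_split exprD mulrA -exprMn -[X in _ <= X]mul1r; apply: ler_pM.
- by rewrite exprn_ge0 ?mulr_ge0 ?divr_ge0 ?mulr_ge0 ?expR_ge0 ?ler0n.
- by rewrite exprn_ge0.
- by rewrite exprn_ile1 ?mulr_ge0 ?divr_ge0 ?mulr_ge0 ?expR_ge0 ?ler0n.
by apply: lerXn2r; rewrite ?nnegrE.
Qed.

Lemma rate_succ_le m : (0 < m)%N -> (m < p)%N -> rate m.+1 <= rate m / 4.
Proof.
move=> m_gt0 m_lt_p.
pose a : R := 2 * s%:R * m%:R / q%:R; pose b : R := 2 * s%:R * m.+1%:R / q%:R.
have q0 : 0 < q%:R :> R by rewrite ltr0n q_gt0.
have m0 : 0 < m%:R :> R by rewrite ltr0n.
have a_ge0 : 0 <= a by rewrite divr_ge0 ?mulr_ge0 ?ler0n.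
have b_ge0 : 0 <= b by rewrite divr_ge0 ?mulr_ge0 ?ler0n.
have b_eq : b = a * (m.+1%:R / m%:R) by rewrite /a /b; field; rewrite !gt_eqF.
have ratio_pow : (m.+1%:R / m%:R) ^+ m <= e.
  by rewrite expr_div_n ler_pdivrMr ?exprn_gt0 ?exprSn_le_expR1.
have be_le : b * e <= 2^-1.
  rewrite /b mulrAC ler_pdivrMr // mulrAC -mulrA -natrM.
  have : (s * m.+1)%:R <= (s * p)%:R :> R by rewrite ler_nat leq_mul2l m_lt_p orbT.
  have := expR_ge0 (1 : R); have := e_sp_le_q; nra.
have bS_le : b ^+ m.+1 <= a ^+ m / 2.
  rewrite exprS {2}b_eq exprMn; apply: (@le_trans _ _ (b * (a ^+ m * e))).
    by apply: ler_wpM2l => //; apply: ler_wpM2l; rewrite ?exprn_ge0.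
  by rewrite mulrCA ler_wpM2l ?exprn_ge0.
have two_pow : 4 <= 2 ^+ (s - 2) :> R.
  apply: le_trans (_ : 2 ^+ 2 <= _); first by rewrite expr2; lra.
  by rewrite ler_weXn2l ?ler1n // leq_subRL ?(leq_trans _ s_ge4).
rewrite /rate -/a -/b !(mulnC (s - 2)%N) !exprM.
apply: le_trans (_ : (a ^+ m / 2) ^+ (s - 2) <= _).
  by apply: lerXn2r; rewrite ?nnegrE ?divr_ge0 ?exprn_ge0.
rewrite expr_div_n; apply: ler_wpM2l; first by rewrite !exprn_ge0.
by rewrite lef_pV2 ?posrE ?exprn_gt0.
Qed.

Lemma rate_add_le k d : (0 < k)%N -> (k + d <= p)%N -> rate (k + d) <= 4^-1 ^+ d * rate k.
Proof.
move=> k_gt0; elim: d => [|d IH] kd_le_p; first by rewrite addn0 expr0 mul1r.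
rewrite addnS in kd_le_p *; apply: le_trans (rate_succ_le _ kd_le_p) _.
  by rewrite addn_gt0 k_gt0.
by rewrite exprSr mulrAC ler_wpM2r ?invr_ge0 // IH // ltnW.
Qed.

Lemma union_term_le_geometric k r m :
  (0 < k)%N -> (k <= m)%N -> (m <= p)%N -> (r <= p)%N ->
  union_term r m <= 2^-1 ^+ (m - k) * (2 * s%:R * k%:R / q%:R) `^ (((s - 2) * k)%:R / 2).
Proof.
move=> k_gt0 k_le_m m_le_p r_le_p.
have ratio_ge0 : 0 <= 2 * s%:R * k%:R / q%:R :> R by rewrite divr_ge0 ?mulr_ge0 ?ler0n.
rewrite -ler_sqr ?nnegrE ?mulr_ge0 ?exprn_ge0 ?powR_ge0 //.
have quarter : (2^-1 : R) ^+ 2 = 4^-1 by rewrite exprVn -natrX.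
rewrite [X in _ <= X]exprMn sqr_powR_half // -exprM mulnC exprM quarter.
apply: le_trans (union_term_sqr_le (leq_trans k_gt0 k_le_m) m_le_p r_le_p) _.
by have := @rate_add_le k (m - k) k_gt0; rewrite subnKC //; apply.
Qed.

End UnionTerms.

Lemma fail_prob_le_union_sum (R : realType) (T : finType) (b s q : nat)
    (id : T -> 'rV['F_2]_b) (blue : {set T}) k :
  (0 < q)%N -> (s * #|~: blue| <= q)%N ->
  fail_prob R s q id blue k <= \sum_(k <= m < #|~: blue|.+1) union_term R s q #|~: blue| m.
Proof.
move=> q_gt0 sr_le_q; rewrite /fail_prob !card_ffun !card_ord.
have N_gt0 : 0 < ((q ^ #|T|) ^ s)%:R :> R by rewrite ltr0n !expn_gt0 q_gt0.
rewrite ler_pdivrMr //; apply: le_trans (_ : _ <= _%:R) _.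
  by rewrite ler_nat; apply: card_fails_le.
rewrite natr_sum mulr_suml; apply: ler_sum_nat => m /andP[_ m_lt].
have m_le_T : (m <= #|T|)%N by apply: leq_trans (max_card (~: blue)); rewrite -ltnS.
rewrite /union_term -(hash_into_ratio _ _ _ q_gt0 m_le_T) !natrM.
by rewrite -[X in _ <= X]mulrA divfK ?gt_eqF.
Qed.

Theorem lemma4p2 (R : realType) (T : finType) (b s q p : nat)
  (id : T -> 'rV['F_2]_b) (blue : {set T}) :
  injective id ->
  (#|~: blue| <= p)%N ->
  (4 <= s)%N ->
  4 * expR 1 * s%:R * p%:R <= q%:R :> R ->
  forall k : nat, (0 < k)%N ->
  fail_prob R s q id blue k <=
    2 * ((2 * s%:R * k%:R / q%:R) `^ (((s - 2) * k)%:R / 2)).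
Proof.
move=> _ red_le_p s_ge4 q_large k k_gt0.
have [red_lt_k | k_le_red] := ltnP #|~: blue| k.
  suff -> : fail_prob R s q id blue k = 0 by rewrite mulr_ge0 ?powR_ge0.
  apply/eqP; rewrite /fail_prob mulf_eq0 pnatr_eq0 cards_eq0; apply/orP; left.
  apply/eqP/setP => H; rewrite !inE.
  by apply/negbTE/negP => /fails_le_red; rewrite leqNgt red_lt_k.
have p_gt0 : (0 < p)%N by rewrite (leq_trans k_gt0) ?(leq_trans k_le_red).
have sr_le_q := leq_trans (leq_mul (leqnn s) red_le_p) (leq_sp_q q_large).
apply: le_trans (fail_prob_le_union_sum _ _ _ (q_gt0 s_ge4 p_gt0 q_large) sr_le_q) _.
apply: le_trans (_ : _ <= \sum_(k <= m < #|~: blue|.+1)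
    2^-1 ^+ (m - k) * (2 * s%:R * k%:R / q%:R) `^ (((s - 2) * k)%:R / 2)) _.
  apply: ler_sum_nat => m /andP[k_le_m]; rewrite ltnS => m_le_red.
  exact: (union_term_le_geometric s_ge4 p_gt0 q_large k_gt0 k_le_m (leq_trans m_le_red red_le_p) red_le_p).
by rewrite -mulr_suml ler_wpM2r ?powR_ge0 ?sum_halfX_le2.
Qed.
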